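(* Let $\mathbf{T}\subset\mathbb{S}^3$ be a $\mathbb{Z}_2$-symmetric spherical tetrahedron with dihedral angles $A$, $B=E$, $C=F$, $D$ and edge lengths $l_A$, $l_B=l_E$, $l_C=l_F$, $l_D$. Put $a_+=\cos\frac{l_A+l_D}{2}$, $a_-=\cos\frac{l_A-l_D}{2}$, $b=\cos l_B$, $c=\cos l_C$, $$\Delta^\star=(a_++a_-+b+c)(a_++a_--b-c)(a_+-a_--b+c)(a_+-a_-+b-c),\qquad t^2=\frac{4\,(a_+a_--bc)(a_+b-a_-c)(a_+c-a_-b)}{\Delta^\star},$$ and let $s^\star_{ij}$ ($i,j=0,1,2,3$) be the $(i,j)$-cofactors of the matrix $$G^\star_s=\begin{pmatrix}1&\frac{a_+}{a_-}&\frac{b}{a_-}&\frac{c}{a_-}\\\frac{a_+}{a_-}&1&\frac{c}{a_-}&\frac{b}{a_-}\\\frac{b}{a_-}&\frac{c}{a_-}&1&\frac{a_+}{a_-}\\\frac{c}{a_-}&\frac{b}{a_-}&\frac{a_+}{a_-}&1\end{pmatrix}.$$ Then (i) $a_-^2-t^2=a_-^6\,(s^\star_{00})^2/\Delta^\star$; (ii) $a_+^2-t^2=a_-^6\,(s^\star_{01})^2/\Delta^\star$; (iii) $b^2-t^2=a_-^6\,(s^\star_{02})^2/\Delta^\star$; (iv) $c^2-t^2=a_-^6\,(s^\star_{03})^2/\Delta^\star$.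
   Context: A spherical tetrahedron $\mathbf{T}\subset\mathbb{S}^3\subset\mathbb{R}^4$ is the intersection of $\mathbb{S}^3$ with the cone over four linearly independent unit vectors $\mathrm{p}_0,\dots,\mathrm{p}_3$. Edge lengths $l_{ij}\in[0,\pi]$: $\cos l_{ij}=\langle\mathrm{p}_i,\mathrm{p}_j\rangle$; dihedral angles $\alpha_{ij}\in[0,\pi]$: $\cos\alpha_{ij}=-\langle\mathrm{v}_i,\mathrm{v}_j\rangle$ with $\mathrm{v}_i$ the outer unit normal of the face opposite $\mathrm{p}_i$. Notation: $l_A=l_{01}$, $l_B=l_{02}$, $l_C=l_{03}$, $l_D=l_{23}$, $l_E=l_{13}$, $l_F=l_{12}$; $A,\dots,F$ are the dihedral angles along the edges of lengths $l_A,\dots,l_F$. $\mathbf{T}$ is $\mathbb{Z}_2$-symmetric if invariant under rotation through $\pi$ about the axis through the midpoints of the edges $\mathrm{p}_0\mathrm{p}_1$ and $\mathrm{p}_2\mathrm{p}_3$ (so $l_B=l_E$, $l_C=l_F$, $B=E$, $C=F$). The $(i,j)$-cofactor of a matrix is $(-1)^{i+j}$ times the determinant of the matrix with row $i$ and column $j$ deleted. *)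

From HB Require Import structures.
From mathcomp Require Import all_boot all_order all_algebra.
From mathcomp Require Import reals trigo.
Set Implicit Arguments. Unset Strict Implicit. Unset Printing Implicit Defensive.
Import Order.TTheory GRing.Theory Num.Theory.
Local Open Scope ring_scope.

(* A spherical tetrahedron is given by the matrix P whose rows p_0,...,p_3
   are its vertices (vectors of R^4). *)

Definition gram {R : realType} (P : 'M[R]_4) : 'M[R]_4 := P *m P^T.

Definition spherical_tetrahedron {R : realType} (P : 'M[R]_4) : Prop :=
  (forall i : 'I_4, gram P i i = 1) /\ \det P != 0.

(* Z2-symmetry: invariance under the rotation through pi about the axis
   through the midpoints of p0p1 and p2p3, i.e. an orthogonal linear map
   (acting on row vectors x |-> x *m Q) swapping p0<->p1 and p2<->p3. *)
Definition Z2_symmetric {R : realType} (P : 'M[R]_4) : Prop :=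
  exists Q : 'M[R]_4, Q *m Q^T = 1%:M /\
    row 0 P *m Q = row 1 P /\ row 1 P *m Q = row 0 P /\
    row 2 P *m Q = row 3 P /\ row 3 P *m Q = row 2 P.

Definition edge_len {R : realType} (P : 'M[R]_4) (i j : 'I_4) : R :=
  acos (gram P i j).

Definition lA {R : realType} (P : 'M[R]_4) := edge_len P 0 1.
Definition lB {R : realType} (P : 'M[R]_4) := edge_len P 0 2.
Definition lC {R : realType} (P : 'M[R]_4) := edge_len P 0 3.
Definition lD {R : realType} (P : 'M[R]_4) := edge_len P 2 3.

(* The matrix G*_s.  Off-diagonal entry at (i,j):
   {i,j} = {0,1} or {2,3} (i+j = 1 or 5): a+/a- ;
   {i,j} = {0,2} or {1,3} (i+j = 2 or 4): b/a- ;
   {i,j} = {0,3} or {1,2} (i+j = 3):      c/a- . *)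
Definition Gstar {R : realType} (ap am b c : R) : 'M[R]_4 :=
  \matrix_(i < 4, j < 4)
    if i == j then 1
    else if (i + j == 1)%N || (i + j == 5)%N then ap / am
    else if (i + j == 2)%N || (i + j == 4)%N then b / am
    else c / am.

Definition Delta_star {R : realType} (ap am b c : R) : R :=
  (ap + am + b + c) * (ap + am - b - c) * (ap - am - b + c) * (ap - am + b - c).

Definition t_sq {R : realType} (ap am b c : R) : R :=
  4 * (ap * am - b * c) * (ap * b - am * c) * (ap * c - am * b)
    / Delta_star ap am b c.

From HB Require Import structures.
From mathcomp Require Import all_boot all_order all_algebra.
From mathcomp Require Import reals trigo.
From mathcomp Require Import ring lra.
Import Order.TTheory GRing.Theory Num.Theory.
Local Open Scope ring_scope.

(* Once [am != 0] and [Delta_star != 0], the four identities are rational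
   identities in [ap, am, b, c], checked by expanding the 3x3 minors of [G*_s].
   Nondegeneracy is geometric.  The Gram matrix of a Z2-symmetric tetrahedron
   commutes with the vertex swap (01)(23), so its determinant splits as
   ((1+x)(1+y) - (b+c)^2) ((1-x)(1-y) - (b-c)^2) with x = cos lA, y = cos lD;
   writing lA = u + v, lD = u - v gives (1 +- x)(1 +- y) = (cos u +- cos v)^2,
   hence [Delta_star = det(P)^2 != 0].  Finally no edge has length pi (its ends
   would be antipodal, contradicting independence), so |v| < pi/2 and
   [am = cos v > 0]. *)

(* Square matrices are given by an entry function on [nat], a form that is
   preserved by Laplace expansion along the first row. *)
Section EntryFunctionMatrices.
Context {R : comNzRingType}.
Implicit Types f : nat -> nat -> R.

Definition natmx_minor f (j a b : nat) : R := f a.+1 (bump j b).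

Lemma cofactor0_natmx n f (j : 'I_n.+1) :
  cofactor (\matrix_(a < n.+1, b < n.+1) f a b) 0 j =
  (-1) ^+ j * \det (\matrix_(a < n, b < n) natmx_minor f j a b).
Proof. by congr (_ * \det _); apply/matrixP => a b; rewrite !mxE. Qed.

Lemma expand_det_natmx n f :
  \det (\matrix_(a < n.+1, b < n.+1) f a b) =
  \sum_(j < n.+1) f 0 j * ((-1) ^+ j * \det (\matrix_(a < n, b < n) natmx_minor f j a b)).
Proof.
rewrite (expand_det_row _ 0); apply: eq_bigr => j _.
by rewrite cofactor0_natmx mxE.
Qed.

(* x = <p0,p1>, y = <p2,p3>, b = <p0,p2> = <p1,p3>, c = <p0,p3> = <p1,p2> *)
Definition Z2_gram (x y b c : R) (i j : nat) : R :=
  if i == j then 1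
  else if (i + j == 1)%N then x else if (i + j == 5)%N then y
  else if (i + j == 2)%N || (i + j == 4)%N then b else c.

Lemma det_Z2_gram (x y b c : R) :
  \det (\matrix_(i < 4, j < 4) Z2_gram x y b c i j) =
  ((1 + x) * (1 + y) - (b + c) ^+ 2) * ((1 - x) * (1 - y) - (b - c) ^+ 2).
Proof.
rewrite !(expand_det_natmx, big_ord_recr, big_ord0, det_mx00) /=.
by rewrite /natmx_minor /Z2_gram /bump /=; ring.
Qed.

End EntryFunctionMatrices.

Section GstarCofactors.
Variables (R : realType) (ap am b c : R).

Definition Gstar_entry (i j : nat) : R :=
  if i == j then 1
  else if (i + j == 1)%N || (i + j == 5)%N then ap / am
  else if (i + j == 2)%N || (i + j == 4)%N then b / am
  else c / am.

Lemma GstarE : Gstar ap am b c = \matrix_(i < 4, j < 4) Gstar_entry i j.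
Proof. by apply/matrixP => i j; rewrite !mxE. Qed.

Hypotheses (am_neq0 : am != 0) (Delta_neq0 : Delta_star ap am b c != 0).

Lemma sub_t_sq_eq (L s : R) :
  L * Delta_star ap am b c - 4 * (ap * am - b * c) * (ap * b - am * c) * (ap * c - am * b)
    = am ^+ 6 * s ^+ 2 ->
  L - t_sq ap am b c = am ^+ 6 * s ^+ 2 / Delta_star ap am b c.
Proof. by move=> eqL; apply: (mulIf Delta_neq0); rewrite mulrBl /t_sq !divfK. Qed.

Lemma cofactor0_Gstar_sq :
  let s := cofactor (Gstar ap am b c) 0 in
  [/\ am ^+ 2 - t_sq ap am b c = am ^+ 6 * (s 0) ^+ 2 / Delta_star ap am b c,
      ap ^+ 2 - t_sq ap am b c = am ^+ 6 * (s 1) ^+ 2 / Delta_star ap am b c,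
      b ^+ 2 - t_sq ap am b c = am ^+ 6 * (s 2) ^+ 2 / Delta_star ap am b c &
      c ^+ 2 - t_sq ap am b c = am ^+ 6 * (s 3) ^+ 2 / Delta_star ap am b c].
Proof.
rewrite /= GstarE; split; apply: sub_t_sq_eq;
  rewrite cofactor0_natmx !(expand_det_natmx, big_ord_recr, big_ord0, det_mx00) /=;
  rewrite /natmx_minor /Gstar_entry /bump /Delta_star /=; by field.
Qed.

End GstarCofactors.

Lemma Delta_star_cos (R : realType) (u v b c : R) :
  Delta_star (cos u) (cos v) b c =
  ((1 + cos (u + v)) * (1 + cos (u - v)) - (b + c) ^+ 2) *
  ((1 - cos (u + v)) * (1 - cos (u - v)) - (b - c) ^+ 2).
Proof.
have S2 : (sin u * sin v) ^+ 2 = (1 - cos u ^+ 2) * (1 - cos v ^+ 2).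
  by rewrite exprMn -!sin2cos2.
have Ep : (1 + cos (u + v)) * (1 + cos (u - v)) = (cos u + cos v) ^+ 2.
  rewrite cosD cosB; transitivity ((1 + cos u * cos v) ^+ 2 - (sin u * sin v) ^+ 2).
    by ring.
  by rewrite S2; ring.
have Em : (1 - cos (u + v)) * (1 - cos (u - v)) = (cos u - cos v) ^+ 2.
  rewrite cosD cosB; transitivity ((1 - cos u * cos v) ^+ 2 - (sin u * sin v) ^+ 2).
    by ring.
  by rewrite S2; ring.
by rewrite Ep Em /Delta_star; ring.
Qed.

Lemma ord4P (i : 'I_4) : [\/ i = 0, i = 1, i = 2 | i = 3].
Proof.
case: i => [[|[|[|[|//]]]] lt_i4];
  [apply: Or41 | apply: Or42 | apply: Or43 | apply: Or44]; exact: val_inj.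
Qed.

Section GramMatrix.
Context {R : realType} {P : 'M[R]_4}.
Implicit Types i j k l : 'I_4.

Lemma gramE i j : gram P i j = \sum_(k < 4) P i k * P j k.
Proof. by rewrite !mxE; apply: eq_bigr => k _; rewrite !mxE. Qed.

Lemma gram_sym i j : gram P i j = gram P j i.
Proof. by rewrite !gramE; apply: eq_bigr => k _; rewrite mulrC. Qed.

Lemma gram_row i j : gram P i j = (row i P *m (row j P)^T) 0 0.
Proof. by rewrite !mxE; apply: eq_bigr => k _; rewrite !mxE. Qed.

Lemma gram_orthogonal_rows {Q : 'M[R]_4} {i j k l} :
  Q *m Q^T = 1%:M -> row i P *m Q = row k P -> row j P *m Q = row l P ->
  gram P k l = gram P i j.
Proof.
move=> QQt Qik Qjl.
by rewrite !gram_row -Qik -Qjl trmx_mul mulmxA -(mulmxA _ Q) QQt mulmx1.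
Qed.

Lemma sum_sqr_rowsD (e : R) i j :
  \sum_(k < 4) (P i k + e * P j k) ^+ 2 =
  gram P i i + 2 * e * gram P i j + e ^+ 2 * gram P j j.
Proof.
rewrite !gramE !mulr_sumr -!big_split /=; apply: eq_bigr => k _; ring.
Qed.

Lemma gram_quadratic_ge0 (e : R) i j :
  0 <= gram P i i + 2 * e * gram P i j + e ^+ 2 * gram P j j.
Proof. by rewrite -sum_sqr_rowsD; apply: sumr_ge0 => k _; apply: sqr_ge0. Qed.

Lemma gram_unit_bound i j : gram P i i = 1 -> gram P j j = 1 ->
  -1 <= gram P i j <= 1.
Proof.
move=> Pii Pjj; have := gram_quadratic_ge0 1 i j; have := gram_quadratic_ge0 (-1) i j.
by rewrite Pii Pjj => ? ?; apply/andP; split; nra.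
Qed.

Lemma gram_eqN1_rowD {i j} : gram P i i = 1 -> gram P j j = 1 -> gram P i j = -1 ->
  row i P + row j P = 0.
Proof.
move=> Pii Pjj Pij; have := sum_sqr_rowsD 1 i j.
rewrite Pii Pjj Pij [X in _ = X](_ : _ = 0); last by ring.
move=> /psumr_eq0P sq0; apply/rowP => k.
by have /eqP := sq0 (fun k _ => sqr_ge0 _) k isT; rewrite !mxE sqrf_eq0 mul1r => /eqP.
Qed.

Hypothesis tetra : spherical_tetrahedron P.

Lemma gram_neqN1 i j : i != j -> gram P i j != -1.
Proof.
have [unitP detP] := tetra; move=> neq_ij; apply/eqP => Pij.
have rowD0 := gram_eqN1_rowD (unitP i) (unitP j) Pij.
have : (delta_mx 0 i + delta_mx 0 j : 'rV[R]_4) *m P = 0.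
  by rewrite mulmxDl -!rowE rowD0.
have Punit : P \in unitmx by rewrite unitmxE unitfE.
move=> /(canRL (mulmxK Punit)); rewrite mul0mx => /matrixP /(_ 0 i).
by rewrite !mxE !eqxx (negbTE neq_ij) addr0 => /eqP; rewrite oner_eq0.
Qed.

Lemma cos_edge_len i j : cos (edge_len P i j) = gram P i j.
Proof.
by rewrite /edge_len acosK // in_itv /=; apply: gram_unit_bound; case: tetra.
Qed.

Lemma edge_len_ge0 i j : 0 <= edge_len P i j.
Proof. by apply: acos_ge0; apply: gram_unit_bound; case: tetra. Qed.

Lemma edge_len_ltpi {i j} : i != j -> edge_len P i j < pi.
Proof.
move=> neq_ij; apply: acos_ltpi.
have /andP[geN1 ->] : -1 <= gram P i j <= 1 by apply: gram_unit_bound; case: tetra.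
by rewrite andbT lt_neqAle eq_sym gram_neqN1.
Qed.

Lemma gram_Z2E : Z2_symmetric P ->
  gram P = \matrix_(i < 4, j < 4)
             Z2_gram (gram P 0 1) (gram P 2 3) (gram P 0 2) (gram P 0 3) i j.
Proof.
have [unitP _] := tetra; move=> [Q [QQt [Q01 [_ [Q23 Q32]]]]].
have E12 : gram P 1 2 = gram P 0 3 := gram_orthogonal_rows QQt Q01 Q32.
have E13 : gram P 1 3 = gram P 0 2 := gram_orthogonal_rows QQt Q01 Q23.
apply/matrixP => i j; rewrite [RHS]mxE.
by case: (ord4P i) => ->; case: (ord4P j) => ->;
  rewrite /Z2_gram /= ?unitP ?E12 ?E13 // gram_sym ?E12 ?E13.
Qed.

Lemma Delta_star_edge_len : Z2_symmetric P ->
  Delta_star (cos ((lA P + lD P) / 2)) (cos ((lA P - lD P) / 2))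
             (cos (lB P)) (cos (lC P)) = \det P ^+ 2.
Proof.
move=> Z2; rewrite Delta_star_cos.
have -> : (lA P + lD P) / 2 + (lA P - lD P) / 2 = lA P by field.
have -> : (lA P + lD P) / 2 - (lA P - lD P) / 2 = lD P by field.
have -> : \det P ^+ 2 = \det (gram P) by rewrite det_mulmx det_tr expr2.
by rewrite [in RHS](gram_Z2E Z2) det_Z2_gram /lA /lB /lC /lD !cos_edge_len.
Qed.

Lemma cos_half_diff_gt0 : 0 < cos ((lA P - lD P) / 2).
Proof.
apply: cos_gt0_pihalf.
have := edge_len_ge0 0 1; have := edge_len_ltpi (isT : (0 : 'I_4) != 1).
have := edge_len_ge0 2 3; have := edge_len_ltpi (isT : (2 : 'I_4) != 3).
rewrite /lA /lD => *; apply/andP; split; lra.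
Qed.

End GramMatrix.

Theorem lemma5 (R : realType) (P : 'M[R]_4) :
  spherical_tetrahedron P -> Z2_symmetric P ->
  let ap := cos ((lA P + lD P) / 2) in
  let am := cos ((lA P - lD P) / 2) in
  let b := cos (lB P) in
  let c := cos (lC P) in
  let Ds := Delta_star ap am b c in
  let t2 := t_sq ap am b c in
  let s := fun i j : 'I_4 => cofactor (Gstar ap am b c) i j in
  [/\ am ^+ 2 - t2 = am ^+ 6 * (s 0 0) ^+ 2 / Ds,
      ap ^+ 2 - t2 = am ^+ 6 * (s 0 1) ^+ 2 / Ds,
      b ^+ 2 - t2 = am ^+ 6 * (s 0 2) ^+ 2 / Ds &
      c ^+ 2 - t2 = am ^+ 6 * (s 0 3) ^+ 2 / Ds].
Proof.
move=> tetra Z2 ap am b c Ds t2 s.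
have am_neq0 : am != 0 by exact/lt0r_neq0/cos_half_diff_gt0.
have Ds_neq0 : Ds != 0.
  by rewrite /Ds Delta_star_edge_len // expf_neq0 //; case: tetra.
exact: cofactor0_Gstar_sq.
Qed.
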